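(* Let $n$ be an integer, $g(m)=10^{m/5}$, and for real $x$ with $2\le x\le n-2$ let $p(x)=(x-1)g(n-1-x)+g(n-2-x)$. Then $p$ is decreasing on $[3,n-2]$, and \[ p(3)=\max\{p(x): x\in\mathbb{Z}^+,\ 2\le x\le n-2\}. \] *)

From Stdlib Require Import Reals Lra Lia ZArith.
Open Scope R_scope.

Definition g (m : R) : R := Rpower 10 (m / 5).

Definition p (n : Z) (x : R) : R :=
  (x - 1) * g (IZR n - 1 - x) + g (IZR n - 2 - x).

(* With a = 10^(-1/5) and c = ln 10 / 5, p n x = 10^((n-1-x)/5) (x - 1 + a), an
   exponential of rate -c times an affine function; such a product decreases
   wherever c (x - 1 + a) >= 1, which holds from x = 3 on since ln 10 > 2 and
   a > 0.62.  The remaining integer point 2 reduces to 1 <= a + a^2. *)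
From Stdlib Require Import Reals ZArith Lra Lia.
Open Scope R_scope.

Lemma exp_affine_decreasing (c b x y : R) :
  0 < c -> 1 <= c * (x + b) -> x < y ->
  exp (- (c * y)) * (y + b) < exp (- (c * x)) * (x + b).
Proof.
  intros hc hcxb hxy.
  assert (hexp : exp (- (c * x)) = exp (- (c * y)) * exp (c * (y - x))).
  { rewrite <- exp_plus. f_equal. ring. }
  assert (hgrowth : 1 + c * (y - x) < exp (c * (y - x))).
  { apply exp_ineq1. nra. }
  assert (hxb : 0 < x + b) by nra.
  assert (hshift : y + b < exp (c * (y - x)) * (x + b)).
  { assert (y - x <= c * (y - x) * (x + b)) by nra. nra. }
  rewrite hexp, Rmult_assoc.
  apply Rmult_lt_compat_l; [apply exp_pos | exact hshift].
Qed.

Lemma g_pos (m : R) : 0 < g m.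
Proof. apply exp_pos. Qed.

Lemma g_exp (m : R) : g m = exp (ln 10 / 5 * m).
Proof. unfold g, Rpower. f_equal. field. Qed.

Lemma g_add (u v : R) : g (u + v) = g u * g v.
Proof. unfold g. rewrite <- Rpower_plus. f_equal. field. Qed.

Lemma g_neg1_pow5 : g (-1) ^ 5 = / 10.
Proof.
  simpl. rewrite Rmult_1_r, <- !g_add.
  unfold g. replace ((-1 + (-1 + (-1 + (-1 + -1)))) / 5) with (Ropp 1) by field.
  rewrite Rpower_Ropp, Rpower_1; lra.
Qed.

Lemma g_neg1_gt : 0.62 < g (-1).
Proof.
  destruct (Rlt_or_le 0.62 (g (-1))) as [hlt | hle]; [exact hlt |].
  assert (hpow : g (-1) ^ 5 <= 0.62 ^ 5).
  { apply pow_incr. pose proof (g_pos (-1)). lra. }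
  rewrite g_neg1_pow5 in hpow. lra.
Qed.

Lemma ln10_gt2 : 2 < ln 10.
Proof.
  rewrite <- (ln_exp 2). apply ln_increasing; [apply exp_pos |].
  replace 2 with (1 + 1) by ring. rewrite exp_plus.
  pose proof exp_le_3. pose proof (exp_pos 1). nra.
Qed.

Lemma p_factor (n : Z) (x : R) :
  p n x = g (IZR n - 1 - x) * (x - 1 + g (-1)).
Proof.
  unfold p. replace (IZR n - 2 - x) with ((IZR n - 1 - x) + -1) by ring.
  rewrite g_add. ring.
Qed.

Lemma p_exp_affine (n : Z) (x : R) :
  p n x = g (IZR n - 1) * (exp (- (ln 10 / 5 * x)) * (x + (g (-1) - 1))).
Proof.
  rewrite p_factor. replace (IZR n - 1 - x) with ((IZR n - 1) + - x) by ring.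
  rewrite g_add, (g_exp (- x)). replace (ln 10 / 5 * - x) with (- (ln 10 / 5 * x)) by ring.
  ring.
Qed.

Lemma p_decreasing (n : Z) (x y : R) : 3 <= x -> x < y -> p n y < p n x.
Proof.
  intros hx hxy. rewrite !p_exp_affine.
  apply Rmult_lt_compat_l; [apply g_pos |].
  pose proof ln10_gt2. pose proof g_neg1_gt.
  apply exp_affine_decreasing; [lra | nra | exact hxy].
Qed.

Lemma p_2_le_p_3 (n : Z) : p n 2 <= p n 3.
Proof.
  rewrite !p_factor.
  replace (IZR n - 1 - 3) with ((IZR n - 1 - 2) + -1) by ring.
  rewrite g_add, Rmult_assoc.
  apply Rmult_le_compat_l; [apply Rlt_le, g_pos |].
  pose proof g_neg1_gt. nra.
Qed.

Theorem lemma2p9 (n : Z) (hn : (5 <= n)%Z) :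
  (forall x y : R, 3 <= x -> x < y -> y <= IZR n - 2 -> p n y < p n x) /\
  ((2 <= 3 <= n - 2)%Z /\
   forall k : Z, (2 <= k)%Z -> (k <= n - 2)%Z -> p n (IZR k) <= p n 3).
Proof.
  split; [intros x y hx hxy _; exact (p_decreasing n x y hx hxy) |].
  split; [lia |].
  intros k hk2 _.
  destruct (Z.eq_dec k 2) as [-> | hk]; [apply p_2_le_p_3 |].
  assert (h3k : 3 <= IZR k) by (apply IZR_le; lia).
  destruct h3k as [h3k | <-].
  - left. exact (p_decreasing n 3 (IZR k) (Rle_refl 3) h3k).
  - apply Rle_refl.
Qed.
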